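(* Let $v=(v_l,v_h)$ be a valuation profile, let $\alpha\in(0,1)$, and let $p\in\{c_l,c_l+1,\dots,c_h\}$. Then the $\alpha$-auction game with valuations $v$ has a Nash equilibrium $\sigma$ with $\pi_l(\sigma)=c_l+(p-c_l)$ and $\pi_h(\sigma)=c_h+(c_h-p)$, and there is a sequence $\{\sigma^\lambda\}_{\lambda\in\mathbb{N}}$ of mixed-strategy profiles, each with full support on $\mathcal{B}$ for both agents and each weakly payoff-monotone for this game, such that $\sigma^\lambda\to\sigma$.
   Context: Two agents $l,h$ jointly own an indivisible good. Agent $i\in\{l,h\}$ has valuation $v_i$; valuations are even nonnegative integers bounded by a maximum valuation $\overline{v}$, with $v_l<v_h$. Agent $i$'s utility from receiving the object and paying $p$ to the other agent is $v_i-p$; from not receiving the object and receiving transfer $p$ it is $p$; agents are expected-utility maximizers. Net valuations are $c_i\equiv v_i/2$. The bid set is $\mathcal{B}=\{0,1,\dots,\overline{p}\}$ with $\overline{p}$ an integer, $\overline{p}\geq\overline{v}/2$. For $\alpha\in[0,1]$, the $\alpha$-auction (with tie-breaker favoring $h$) is: each agent simultaneously chooses a bid in $\mathcal{B}$; the agent with the strictly higher bid receives the object, and in case of a tie agent $h$ receives the object; the agent receiving the object pays $\alpha\cdot(\text{winner's bid})+(1-\alpha)\cdot(\text{loser's bid})$ to the other agent. A mixed strategy of agent $i$ is $\sigma_i\in\Delta(\mathcal{B})$, and $\pi_i(\sigma)$ is agent $i$'s expected utility under profile $\sigma$. A Nash equilibrium is a profile in which each agent's strategy puts positive probability only on bids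 maximizing her expected utility given the other agent's strategy. A profile $\sigma$ is weakly payoff-monotone for the game if for each agent $i$ and each pair of bids $b,d\in\mathcal{B}$, $\sigma_i(b)>\sigma_i(d)$ implies that the expected utility of bid $b$ for agent $i$ against $\sigma_{-i}$ is strictly greater than that of bid $d$. Convergence is pointwise convergence of probability vectors. *)

From Stdlib Require Import Reals Lra Lia Arith.
Open Scope R_scope.

(* Bids are naturals b with (b <= pbar)%nat.  A mixed strategy is a function
   nat -> R whose values on the bid set {0..pbar} are probabilities;
   values outside the bid set are irrelevant. *)

Definition price (alpha : R) (win lose : nat) : R :=
  alpha * INR win + (1 - alpha) * INR lose.

(* Pure payoff of agent l bidding b when h bids d (ties go to h). *)
Definition u_l (alpha : R) (vl : nat) (b d : nat) : R :=
  if (d <? b)%nat then INR vl - price alpha b d else price alpha d b.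

Definition u_h (alpha : R) (vh : nat) (d b : nat) : R :=
  if (b <=? d)%nat then INR vh - price alpha d b else price alpha b d.

Definition is_mixed (pbar : nat) (s : nat -> R) : Prop :=
  (forall b, (b <= pbar)%nat -> 0 <= s b) /\ sum_f_R0 s pbar = 1.

Definition EU_l (alpha : R) (vl pbar : nat) (sh : nat -> R) (b : nat) : R :=
  sum_f_R0 (fun d => sh d * u_l alpha vl b d) pbar.
Definition EU_h (alpha : R) (vh pbar : nat) (sl : nat -> R) (d : nat) : R :=
  sum_f_R0 (fun b => sl b * u_h alpha vh d b) pbar.

Definition pi_l (alpha : R) (vl pbar : nat) (sl sh : nat -> R) : R :=
  sum_f_R0 (fun b => sl b * EU_l alpha vl pbar sh b) pbar.
Definition pi_h (alpha : R) (vh pbar : nat) (sl sh : nat -> R) : R :=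
  sum_f_R0 (fun d => sh d * EU_h alpha vh pbar sl d) pbar.

Definition is_nash (alpha : R) (vl vh pbar : nat) (sl sh : nat -> R) : Prop :=
  is_mixed pbar sl /\ is_mixed pbar sh /\
  (forall b, (b <= pbar)%nat -> 0 < sl b ->
     forall b', (b' <= pbar)%nat -> EU_l alpha vl pbar sh b' <= EU_l alpha vl pbar sh b) /\
  (forall d, (d <= pbar)%nat -> 0 < sh d ->
     forall d', (d' <= pbar)%nat -> EU_h alpha vh pbar sl d' <= EU_h alpha vh pbar sl d).

Definition full_support (pbar : nat) (s : nat -> R) : Prop :=
  forall b, (b <= pbar)%nat -> 0 < s b.

Definition weakly_payoff_monotone (alpha : R) (vl vh pbar : nat) (sl sh : nat -> R) : Prop :=
  (forall b d, (b <= pbar)%nat -> (d <= pbar)%nat ->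
     sl d < sl b -> EU_l alpha vl pbar sh d < EU_l alpha vl pbar sh b) /\
  (forall b d, (b <= pbar)%nat -> (d <= pbar)%nat ->
     sh d < sh b -> EU_h alpha vh pbar sl d < EU_h alpha vh pbar sl b).

From Stdlib Require Import Reals Lra Lia.
Open Scope R_scope.

(* Both agents bidding p is the equilibrium.  For c_l <= p <= c_h, bidding p
   against p is a strict best response for each agent, with margin
   m = min(alpha, 1 - alpha): a one-tick deviation changes the price by alpha
   or 1 - alpha, and switching between winning and losing does not pay
   because p lies between the two net valuations.

   The approximating profiles are "trembles" of this point mass: weight e on
   every bid, the remaining mass on p.  Against a tremble, expected payoffs
   differ from the payoffs against p by O(e), so for small e bid p remains
   strictly better than every other bid.  The only strict comparison between
   tremble weights is "weight of p > weight of another bid", hence trembles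
   are weakly payoff-monotone; taking e = e_0/(n+1) gives the sequence. *)

Definition pure (p : nat) (b : nat) : R := if Nat.eqb b p then 1 else 0.

Lemma sum_pure (p n : nat) (g : nat -> R) :
  sum_f_R0 (fun d => pure p d * g d) n = if (p <=? n)%nat then g p else 0.
Proof.
  induction n as [|n IH].
  - simpl; unfold pure. destruct (Nat.eqb_spec 0 p) as [<-|Hp]; simpl; [ring|].
    destruct p; [lia|]; simpl; ring.
  - rewrite tech5, IH; unfold pure.
    destruct (Nat.leb_spec p n), (Nat.eqb_spec (S n) p), (Nat.leb_spec p (S n));
      subst; try lia; ring.
Qed.

Lemma sum_pure_in (p n : nat) (g : nat -> R) : (p <= n)%nat ->
  sum_f_R0 (fun d => pure p d * g d) n = g p.
Proof. intros Hp; rewrite sum_pure; apply Nat.leb_le in Hp; now rewrite Hp. Qed.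

Lemma sum_abs_bound (f : nat -> R) (B : R) (n : nat) :
  (forall i, (i <= n)%nat -> Rabs (f i) <= B) ->
  Rabs (sum_f_R0 f n) <= (INR n + 1) * B.
Proof.
  intros Hf. eapply Rle_trans; [apply sum_f_R0_triangle|].
  eapply Rle_trans; [apply (sum_Rle _ (fun _ => B)); exact Hf|].
  rewrite sum_cte, S_INR; lra.
Qed.

Lemma Rabs_le_between (x B : R) : Rabs x <= B -> - B <= x <= B.
Proof.
  intros H. pose proof (Rle_abs x). pose proof (Rle_abs (- x)).
  rewrite Rabs_Ropp in *; lra.
Qed.

Definition EU (U : nat -> nat -> R) (pbar : nat) (s : nat -> R) (b : nat) : R :=
  sum_f_R0 (fun d => s d * U b d) pbar.

Definition tremble (e : R) (pbar p : nat) (b : nat) : R :=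
  e + (1 - (INR pbar + 1) * e) * pure p b.

Lemma pure_mixed (pbar p : nat) : (p <= pbar)%nat -> is_mixed pbar (pure p).
Proof.
  intros Hp; split.
  - intros b _; unfold pure; destruct (Nat.eqb b p); lra.
  - rewrite (sum_eq _ (fun d => pure p d * 1)) by (intros; ring).
    now apply sum_pure_in.
Qed.

Lemma pure_support (p b : nat) : 0 < pure p b -> b = p.
Proof. unfold pure; destruct (Nat.eqb_spec b p); auto; lra. Qed.

Lemma EU_pure (U : nat -> nat -> R) (pbar p b : nat) : (p <= pbar)%nat ->
  EU U pbar (pure p) b = U b p.
Proof. intros; unfold EU; now apply (sum_pure_in p pbar (U b)). Qed.

Lemma sum_tremble (e : R) (pbar p : nat) (g : nat -> R) : (p <= pbar)%nat ->
  sum_f_R0 (fun d => tremble e pbar p d * g d) pbar =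
  e * sum_f_R0 g pbar + (1 - (INR pbar + 1) * e) * g p.
Proof.
  intros Hp. rewrite <- (sum_pure_in p pbar g Hp), !scal_sum, <- plus_sum.
  apply sum_eq; intros; unfold tremble; ring.
Qed.

Lemma EU_tremble (U : nat -> nat -> R) (e : R) (pbar p b : nat) : (p <= pbar)%nat ->
  EU U pbar (tremble e pbar p) b =
  e * sum_f_R0 (U b) pbar + (1 - (INR pbar + 1) * e) * U b p.
Proof. intros; unfold EU; now apply sum_tremble. Qed.

Lemma tremble_full_mixed (e : R) (pbar p : nat) :
  (p <= pbar)%nat -> 0 < e -> (INR pbar + 1) * e < 1 ->
  is_mixed pbar (tremble e pbar p) /\ full_support pbar (tremble e pbar p).
Proof.
  intros Hp He He1.
  assert (Hpos : forall b, 0 < tremble e pbar p b).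
  { intro b; unfold tremble, pure; destruct (Nat.eqb b p); lra. }
  split; [split|].
  - intros b _; apply Rlt_le, Hpos.
  - rewrite (sum_eq _ (fun d => tremble e pbar p d * 1)) by (intros; ring).
    rewrite sum_tremble, sum_cte, S_INR by exact Hp; ring.
  - intros b _; apply Hpos.
Qed.

Lemma tremble_weight_lt_one (pbar : nat) (K m e : R) : 0 <= K -> m <= 1 -> 0 < e ->
  4 * (INR pbar + 1) * (K + 1) * e <= m -> (INR pbar + 1) * e < 1.
Proof. intros; pose proof (pos_INR pbar); nra. Qed.

Lemma tremble_lt (e : R) (pbar p b d : nat) : (INR pbar + 1) * e < 1 ->
  tremble e pbar p d < tremble e pbar p b -> b = p /\ d <> p.
Proof.
  unfold tremble, pure; intros Hc H.
  destruct (Nat.eqb_spec b p), (Nat.eqb_spec d p); split; auto; lra.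
Qed.

Section GenericTremble.

Variables (U : nat -> nat -> R) (pbar p : nat) (K m : R).

Hypothesis p_in_grid : (p <= pbar)%nat.
Hypothesis U_bounded : forall b d, (b <= pbar)%nat -> (d <= pbar)%nat -> Rabs (U b d) <= K.
Hypothesis margin_pos : 0 < m <= 1.
Hypothesis strict_best : forall d, d <> p -> U d p + m <= U p p.

Lemma pure_best_response (d : nat) : EU U pbar (pure p) d <= EU U pbar (pure p) p.
Proof.
  rewrite !EU_pure by exact p_in_grid.
  destruct (Nat.eq_dec d p) as [->|Hd]; [lra|].
  pose proof (strict_best d Hd); lra.
Qed.

Lemma payoff_bound_nonneg : 0 <= K.
Proof. pose proof (U_bounded p p p_in_grid p_in_grid); pose proof (Rabs_pos (U p p)); lra. Qed.

(* A tremble of size e with 4 (pbar+1) (K+1) e <= m keeps p strictly better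
   than any other bid: the O(e) perturbation cannot close the margin m. *)
Lemma tremble_strict_best (e : R) (d : nat) :
  (d <= pbar)%nat -> d <> p -> 0 < e -> 4 * (INR pbar + 1) * (K + 1) * e <= m ->
  EU U pbar (tremble e pbar p) d < EU U pbar (tremble e pbar p) p.
Proof.
  intros Hd Hne He Hsmall. rewrite !EU_tremble by exact p_in_grid.
  pose proof payoff_bound_nonneg as HK. pose proof (pos_INR pbar).
  destruct (Rabs_le_between _ _ (sum_abs_bound _ _ _ (fun i => U_bounded p i p_in_grid))).
  destruct (Rabs_le_between _ _ (sum_abs_bound _ _ _ (fun i => U_bounded d i Hd))).
  pose proof (strict_best d Hne).
  assert (Hweight : (INR pbar + 1) * e <= 1 / 4) by nra.
  nra.
Qed.

Lemma tremble_monotone (e : R) :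
  0 < e -> 4 * (INR pbar + 1) * (K + 1) * e <= m ->
  forall b d, (b <= pbar)%nat -> (d <= pbar)%nat ->
    tremble e pbar p d < tremble e pbar p b ->
    EU U pbar (tremble e pbar p) d < EU U pbar (tremble e pbar p) b.
Proof.
  intros He Hsmall b d _ Hd Hlt.
  assert (HPe := tremble_weight_lt_one pbar K m e payoff_bound_nonneg
                   (proj2 margin_pos) He Hsmall).
  destruct (tremble_lt e pbar p b d HPe Hlt) as [-> Hne].
  now apply tremble_strict_best.
Qed.

End GenericTremble.

Lemma cv_const (c : R) : Un_cv (fun _ => c) c.
Proof. intros eps Heps; exists 0%nat; intros; unfold R_dist; rewrite Rminus_diag, Rabs_R0; lra. Qed.

Lemma vanishing_seq (C m : R) : 0 < C -> 0 < m ->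
  exists e : nat -> R, (forall n, 0 < e n /\ C * e n <= m) /\ Un_cv e 0.
Proof.
  intros HC Hm; exists (fun n => m / C / INR (S n)); split.
  - intro n. pose proof (lt_0_INR (S n) (Nat.lt_0_succ n)).
    assert (1 <= INR (S n)) by (rewrite S_INR; pose proof (pos_INR n); lra).
    split; [apply Rdiv_lt_0_compat; [apply Rdiv_lt_0_compat|]; lra|].
    replace (C * (m / C / INR (S n))) with (m / INR (S n)) by (field; lra).
    apply Rmult_le_reg_r with (INR (S n)); [lra|].
    unfold Rdiv; rewrite Rmult_assoc, Rinv_l by lra; nra.
  - replace 0 with (m / C * 0) by ring.
    apply (CV_mult (fun _ => m / C)); [apply cv_const|].
    apply cv_infty_cv_0. intro M. destruct (INR_unbounded M) as [N HN].
    exists N; intros n Hn. apply Rlt_le_trans with (INR N); [exact HN|].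
    apply le_INR; lia.
Qed.

Lemma tremble_cv (e : nat -> R) (pbar p b : nat) : Un_cv e 0 ->
  Un_cv (fun n => tremble (e n) pbar p b) (pure p b).
Proof.
  intros He.
  assert (Hlim : Un_cv (fun n => pure p b + e n * (1 - (INR pbar + 1) * pure p b))
                       (pure p b + 0 * (1 - (INR pbar + 1) * pure p b))).
  { apply (CV_plus (fun _ => pure p b)); [apply cv_const|].
    apply CV_mult; [exact He | apply cv_const]. }
  rewrite Rmult_0_l, Rplus_0_r in Hlim.
  intros eps Heps; destruct (Hlim eps Heps) as [N HN]; exists N; intros n Hn.
  unfold tremble; replace (e n + (1 - (INR pbar + 1) * e n) * pure p b)
    with (pure p b + e n * (1 - (INR pbar + 1) * pure p b)) by ring.
  now apply HN.
Qed.

(* Changing one bid by one tick changes the price by at least this much. *)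
Definition tick_margin (alpha : R) : R := Rmin alpha (1 - alpha).

Lemma tick_margin_bounds (alpha : R) : 0 < alpha < 1 ->
  0 < tick_margin alpha <= 1 /\ tick_margin alpha <= alpha /\ tick_margin alpha <= 1 - alpha.
Proof. intros; unfold tick_margin, Rmin; destruct (Rle_dec alpha (1 - alpha)); lra. Qed.

Lemma price_bounds (alpha : R) (pbar w l : nat) : 0 < alpha < 1 ->
  (w <= pbar)%nat -> (l <= pbar)%nat -> 0 <= price alpha w l <= INR pbar.
Proof.
  intros Ha Hw Hl. unfold price. apply le_INR in Hw, Hl.
  pose proof (pos_INR w); pose proof (pos_INR l). nra.
Qed.

Lemma u_l_bounded (alpha : R) (vl pbar b d : nat) : 0 < alpha < 1 ->
  (b <= pbar)%nat -> (d <= pbar)%nat -> Rabs (u_l alpha vl b d) <= INR vl + INR pbar.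
Proof.
  intros Ha Hb Hd. pose proof (pos_INR vl). apply Rabs_le. unfold u_l.
  destruct (d <? b)%nat.
  - pose proof (price_bounds alpha pbar b d Ha Hb Hd); lra.
  - pose proof (price_bounds alpha pbar d b Ha Hd Hb); lra.
Qed.

Lemma u_h_bounded (alpha : R) (vh pbar d b : nat) : 0 < alpha < 1 ->
  (d <= pbar)%nat -> (b <= pbar)%nat -> Rabs (u_h alpha vh d b) <= INR vh + INR pbar.
Proof.
  intros Ha Hd Hb. pose proof (pos_INR vh). apply Rabs_le. unfold u_h.
  destruct (b <=? d)%nat.
  - pose proof (price_bounds alpha pbar d b Ha Hd Hb); lra.
  - pose proof (price_bounds alpha pbar b d Ha Hb Hd); lra.
Qed.

Lemma u_l_tie (alpha : R) (vl p : nat) : u_l alpha vl p p = INR p.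
Proof. unfold u_l, price. rewrite Nat.ltb_irrefl. ring. Qed.

Lemma u_h_tie (alpha : R) (vh p : nat) : u_h alpha vh p p = INR vh - INR p.
Proof. unfold u_h, price. rewrite Nat.leb_refl. ring. Qed.

Lemma succ_INR_le (a b : nat) : (a < b)%nat -> INR a + 1 <= INR b.
Proof. intros; rewrite <- S_INR; apply le_INR; lia. Qed.

(* Against p, agent l strictly prefers p when c_l <= p: outbidding costs at
   least p + alpha while the object is worth v_l <= 2p, underbidding lowers
   the price received by at least 1 - alpha. *)
Lemma u_l_margin (alpha : R) (vl p b : nat) : 0 < alpha < 1 -> INR vl <= 2 * INR p ->
  b <> p -> u_l alpha vl b p + tick_margin alpha <= u_l alpha vl p p.
Proof.
  intros Ha Hv Hb. rewrite u_l_tie. destruct (tick_margin_bounds alpha Ha) as (_ & H1 & H2).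
  unfold u_l, price. destruct (Nat.ltb_spec p b) as [Hlt|Hge].
  - pose proof (succ_INR_le p b Hlt); nra.
  - pose proof (succ_INR_le b p ltac:(lia)); nra.
Qed.

(* Against p, agent h strictly prefers p when p <= c_h: overbidding raises
   the price by at least alpha, underbidding loses the object for a price
   at most p - (1 - alpha) while keeping it is worth v_h - p >= p. *)
Lemma u_h_margin (alpha : R) (vh p d : nat) : 0 < alpha < 1 -> 2 * INR p <= INR vh ->
  d <> p -> u_h alpha vh d p + tick_margin alpha <= u_h alpha vh p p.
Proof.
  intros Ha Hv Hd. rewrite u_h_tie. destruct (tick_margin_bounds alpha Ha) as (_ & H1 & H2).
  unfold u_h, price. destruct (Nat.leb_spec p d) as [Hge|Hlt].
  - pose proof (succ_INR_le p d ltac:(lia)); nra.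
  - pose proof (succ_INR_le d p Hlt); nra.
Qed.

Lemma auction_pure_nash (alpha : R) (vl vh pbar p : nat) : 0 < alpha < 1 ->
  (p <= pbar)%nat -> INR vl <= 2 * INR p <= INR vh ->
  is_nash alpha vl vh pbar (pure p) (pure p).
Proof.
  intros Ha Hp [Hl Hh]. destruct (tick_margin_bounds alpha Ha) as (Hm & _).
  split; [|split; [|split]]; try (apply pure_mixed; exact Hp);
    intros b _ Hb b' _; rewrite (pure_support p b Hb).
  - apply (pure_best_response (u_l alpha vl) pbar p (tick_margin alpha)); auto.
    intros d Hd; now apply u_l_margin.
  - apply (pure_best_response (u_h alpha vh) pbar p (tick_margin alpha)); auto.
    intros d Hd; now apply u_h_margin.
Qed.

Lemma auction_pure_payoffs (alpha : R) (vl vh pbar p : nat) : (p <= pbar)%nat ->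
  pi_l alpha vl pbar (pure p) (pure p) = INR p /\
  pi_h alpha vh pbar (pure p) (pure p) = INR vh - INR p.
Proof.
  intros Hp; unfold pi_l, pi_h; rewrite !(sum_pure_in p pbar) by exact Hp; split.
  - transitivity (u_l alpha vl p p); [now apply EU_pure | apply u_l_tie].
  - transitivity (u_h alpha vh p p); [now apply EU_pure | apply u_h_tie].
Qed.

Lemma auction_tremble_monotone (alpha : R) (vl vh pbar p : nat) (e : R) :
  0 < alpha < 1 -> (p <= pbar)%nat -> INR vl <= 2 * INR p <= INR vh ->
  (vl <= vh)%nat -> 0 < e ->
  4 * (INR pbar + 1) * (INR vh + INR pbar + 1) * e <= tick_margin alpha ->
  weakly_payoff_monotone alpha vl vh pbar (tremble e pbar p) (tremble e pbar p).
Proof.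
  intros Ha Hp [Hl Hh] Hvlh He Hsmall. destruct (tick_margin_bounds alpha Ha) as (Hm & _).
  split.
  - apply (tremble_monotone (u_l alpha vl) pbar p (INR vh + INR pbar) (tick_margin alpha));
      auto.
    + intros b d Hb Hd. pose proof (u_l_bounded alpha vl pbar b d Ha Hb Hd).
      pose proof (le_INR _ _ Hvlh); lra.
    + intros d Hd; now apply u_l_margin.
  - apply (tremble_monotone (u_h alpha vh) pbar p (INR vh + INR pbar) (tick_margin alpha));
      auto.
    + intros d b Hd Hb; now apply u_h_bounded.
    + intros d Hd; now apply u_h_margin.
Qed.

Theorem mainTheorem4 (vbar pbar vl vh p : nat) (alpha : R) :
  Nat.Even vl -> Nat.Even vh -> (vh <= vbar)%nat -> (vl < vh)%nat ->
  (vbar <= 2 * pbar)%nat ->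
  0 < alpha < 1 ->
  INR vl / 2 <= INR p <= INR vh / 2 ->
  exists sl sh : nat -> R,
    is_nash alpha vl vh pbar sl sh /\
    pi_l alpha vl pbar sl sh = INR vl / 2 + (INR p - INR vl / 2) /\
    pi_h alpha vh pbar sl sh = INR vh / 2 + (INR vh / 2 - INR p) /\
    exists sql sqh : nat -> nat -> R,
      (forall n, is_mixed pbar (sql n) /\ is_mixed pbar (sqh n) /\
                 full_support pbar (sql n) /\ full_support pbar (sqh n) /\
                 weakly_payoff_monotone alpha vl vh pbar (sql n) (sqh n)) /\
      (forall b, (b <= pbar)%nat ->
         Un_cv (fun n => sql n b) (sl b) /\ Un_cv (fun n => sqh n b) (sh b)).
Proof.
  intros _ _ Hvh Hlh Hvb Ha [Hpl Hph].
  assert (Hp : (p <= pbar)%nat).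
  { apply INR_le. apply le_INR in Hvh, Hvb. rewrite mult_INR in Hvb. simpl in Hvb. lra. }
  assert (Hbids : INR vl <= 2 * INR p <= INR vh) by lra.
  destruct (tick_margin_bounds alpha Ha) as ([Hm0 Hm1] & _).
  set (K := INR vh + INR pbar).
  assert (HK : 0 <= K) by (unfold K; pose proof (pos_INR vh); pose proof (pos_INR pbar); lra).
  destruct (vanishing_seq (4 * (INR pbar + 1) * (K + 1)) (tick_margin alpha))
    as (e & Hsmall & Hcv); [pose proof (pos_INR pbar); nra | exact Hm0 |].
  destruct (auction_pure_payoffs alpha vl vh pbar p Hp) as [Hpil Hpih].
  exists (pure p), (pure p); split; [|split; [|split]].
  - now apply auction_pure_nash.
  - rewrite Hpil; lra.
  - rewrite Hpih; lra.
  - exists (fun n => tremble (e n) pbar p), (fun n => tremble (e n) pbar p); split.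
    + intro n; destruct (Hsmall n) as [He0 He1].
      destruct (tremble_full_mixed (e n) pbar p Hp He0) as [Hmix Hfull];
        [exact (tremble_weight_lt_one pbar K _ _ HK Hm1 He0 He1) |].
      do 4 (split; [assumption|]).
      apply auction_tremble_monotone; auto; lia.
    + intros b _; split; apply tremble_cv, Hcv.
Qed.
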